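(* Let $A,B\in\mathbb{R}^{N\times N}$, $\tau>0$, $T>0$. The system $u'(t)=Au(t)+Bu(t-\tau)$ has no nontrivial $T$-periodic solutions if and only if $$h_k:=\det\begin{pmatrix}X_k & -Y_k\\ Y_k & X_k\end{pmatrix}\neq0\quad\text{for all }k\in\mathbb{N}_0,$$ where $X_k:=A+\cos(\lambda_k\tau)B$, $Y_k:=\lambda_kI+\sin(\lambda_k\tau)B$ and $\lambda_k:=2k\pi/T$. *)

From HB Require Import structures.
From Stdlib Require Import Reals ClassicalEpsilon FunctionalExtensionality.
From mathcomp Require Import all_boot all_order all_algebra.

Set Implicit Arguments.
Unset Strict Implicit.
Unset Printing Implicit Defensive.

(* NB: after importing MathComp, the key %R denotes ring_scope; Stdlib's
   R_scope is opened here so bare numerals/operators are Stdlib reals. *)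
Local Open Scope R_scope.

Definition R_eqb (x y : R) : bool := if Req_EM_T x y then true else false.
Lemma R_eqP : Equality.axiom R_eqb.
Proof. by move=> x y; rewrite /R_eqb; case: Req_EM_T => H; constructor. Qed.

HB.instance Definition _ := hasDecEq.Build R R_eqP.

Definition R_find (P : pred R) (n : nat) : option R :=
  match excluded_middle_informative (exists x, P x) with
  | left H => Some (proj1_sig (constructive_indefinite_description _ H))
  | right _ => None
  end.

Lemma R_find_correct P n x : R_find P n = Some x -> P x.
Proof.
rewrite /R_find; case: excluded_middle_informative => // H [<-].
exact: proj2_sig (constructive_indefinite_description _ H).
Qed.

Lemma R_find_complete (P : pred R) : (exists x, P x) -> exists n, R_find P n.
Proof. by move=> H; exists 0%N; rewrite /R_find; case: excluded_middle_informative. Qed.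

Lemma R_find_ext (P Q : pred R) : P =1 Q -> R_find P =1 R_find Q.
Proof. by move=> /functional_extensionality -> n. Qed.

HB.instance Definition _ :=
  hasChoice.Build R R_find_correct R_find_complete R_find_ext.

Lemma R_addA : ssrfun.associative Rplus. Proof. by move=> x y z; rewrite Rplus_assoc. Qed.
Lemma R_addC : ssrfun.commutative Rplus. Proof. exact: Rplus_comm. Qed.
Lemma R_add0 : left_id 0 Rplus. Proof. exact: Rplus_0_l. Qed.
Lemma R_addN : left_inverse 0 Ropp Rplus. Proof. exact: Rplus_opp_l. Qed.

HB.instance Definition _ := GRing.isZmodule.Build R R_addA R_addC R_add0 R_addN.

Lemma R_mulA : ssrfun.associative Rmult. Proof. by move=> x y z; rewrite Rmult_assoc. Qed.
Lemma R_mulC : ssrfun.commutative Rmult. Proof. exact: Rmult_comm. Qed.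
Lemma R_mul1 : left_id 1 Rmult. Proof. exact: Rmult_1_l. Qed.
Lemma R_mulDl : left_distributive Rmult Rplus.
Proof. by move=> x y z; rewrite Rmult_plus_distr_r. Qed.
Lemma R_one_neq0 : (1 : R) != 0.
Proof. by apply/eqP; exact: R1_neq_R0. Qed.

HB.instance Definition _ :=
  GRing.Zmodule_isComNzRing.Build R R_mulA R_mulC R_mul1 R_mulDl R_one_neq0.

Definition dde_solution (N : nat) (A B : 'M[R]_N) (tau : R)
    (u : 'I_N -> R -> R) : Prop :=
  forall (t : R) (i : 'I_N),
    derivable_pt_lim (u i) t
      (\sum_(j < N) (A i j * u j t + B i j * u j (t - tau)))%R.

Definition T_periodic (N : nat) (T : R) (u : 'I_N -> R -> R) : Prop :=
  forall (t : R) (i : 'I_N), u i (t + T) = u i t.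

Definition nontrivial (N : nat) (u : 'I_N -> R -> R) : Prop :=
  exists (t : R) (i : 'I_N), u i t <> 0.

Definition lam (T : R) (k : nat) : R := 2 * INR k * PI / T.

Definition Xk (N : nat) (A B : 'M[R]_N) (tau T : R) (k : nat) : 'M[R]_N :=
  (A + cos (lam T k * tau) *: B)%R.
Definition Yk (N : nat) (B : 'M[R]_N) (tau T : R) (k : nat) : 'M[R]_N :=
  ((lam T k)%:M + sin (lam T k * tau) *: B)%R.

Definition hk (N : nat) (A B : 'M[R]_N) (tau T : R) (k : nat) : R :=
  (\det (block_mx (Xk A B tau T k) (- Yk B tau T k)
                  (Yk B tau T k) (Xk A B tau T k)))%R.

(* Testing a T-periodic solution u against cos (lam_k t) and sin (lam_k t), integrating
   by parts and moving the delay from u onto the test function by periodicity, shows that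
   the Fourier coefficient vectors (c, s) of u satisfy X_k c = Y_k s and Y_k c = - X_k s,
   i.e. col (c, s) lies in the kernel of [[X_k, -Y_k], [Y_k, X_k]].  Conversely a kernel
   vector (c, s) gives the solution c cos (lam_k t) + s sin (lam_k t).  So if no h_k
   vanishes, all Fourier coefficients of u vanish, and then u = 0: were a component
   positive at x, its integral over a period against the trigonometric polynomial
   (1 - cos (lam_1 e) + cos (lam_1 (t - x)))^n, which is at least some r > 1 near x and at
   most 1 in modulus away from x, would grow like r^n instead of being 0. *)

From HB Require Import structures.
From Stdlib Require Import Reals Lra FunctionalExtensionality.
From mathcomp Require Import all_boot all_order all_algebra.
From Coquelicot Require Import Coquelicot.

Set Implicit Arguments.
Unset Strict Implicit.
Unset Printing Implicit Defensive.

Import GRing.Theory.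

Local Open Scope R_scope.

Lemma R_mulVf (x : R) : (x != 0)%R -> Rinv x * x = 1.
Proof. by move=> /eqP; exact: Rinv_l. Qed.

HB.instance Definition _ := GRing.ComNzRing_isField.Build R R_mulVf Rinv_0.

(** * Kernels of the block matrix [[X, -Y], [Y, X]] *)

Section BlockKernel.
Local Open Scope ring_scope.

Lemma det_eq0_col_kernel (K : fieldType) n (M : 'M[K]_n) :
  reflect (exists2 v : 'cV_n, v != 0 & M *m v = 0) (\det M == 0).
Proof.
rewrite -det_tr; apply: (iffP det0P) => -[v nz_v Mv].
- exists v^T; first by rewrite trmx_eq0.
  by rewrite -[M]trmxK -trmx_mul Mv trmx0.
- exists v^T; first by rewrite trmx_eq0.
  by rewrite -trmx_mul Mv trmx0.
Qed.

Lemma block_kernel_swap (K : comNzRingType) n (X Y : 'M[K]_n) (c s : 'cV_n) :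
  block_mx X (- Y) Y X *m col_mx c s = 0 -> block_mx X (- Y) Y X *m col_mx s (- c) = 0.
Proof.
rewrite !mul_block_col => /eqP; rewrite col_mx_eq0 => /andP[/eqP h1 /eqP h2].
rewrite mulNmx in h1; rewrite !mulNmx !mulmxN opprK addrC h2 -opprB h1 oppr0.
by rewrite col_mx0.
Qed.

Lemma block_kernel_nontrivial (K : fieldType) n (X Y : 'M[K]_n) :
  \det (block_mx X (- Y) Y X) = 0 ->
  exists c s : 'cV_n, c != 0 /\ block_mx X (- Y) Y X *m col_mx c s = 0.
Proof.
move/eqP/det_eq0_col_kernel => [v]; rewrite -[v]vsubmxK => nz_v Mv.
have [c0 | nz_c] := eqVneq (usubmx v) 0; last by exists (usubmx v), (dsubmx v).
exists (dsubmx v), (- usubmx v); split; last exact: block_kernel_swap.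
by apply: contraNneq nz_v => s0; rewrite c0 s0 col_mx0.
Qed.

Lemma block_kernel_trivial (K : fieldType) n (X Y : 'M[K]_n) (c s : 'cV_n) :
  \det (block_mx X (- Y) Y X) != 0 ->
  block_mx X (- Y) Y X *m col_mx c s = 0 -> c = 0 /\ s = 0.
Proof.
move=> nz_det Mcs; suff: col_mx c s == 0 by rewrite col_mx_eq0 => /andP[/eqP -> /eqP ->].
by apply: contraNT nz_det => nz_cs; apply/det_eq0_col_kernel; exists (col_mx c s).
Qed.

End BlockKernel.

(** * Harmonic solutions *)

Definition dde_rhs N (A B : 'M[R]_N) (x y : 'I_N -> R) (i : 'I_N) : R :=
  (\sum_(j < N) (A i j * x j + B i j * y j))%R.

(* Ring-scope operations on R are Rplus and Rmult only up to conversion; these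
   rewrite rules expose them to Stdlib's ring. *)
Lemma R_addE (x y : R) : (x + y)%R = x + y. Proof. by []. Qed.

Lemma R_mulE (x y : R) : (x * y)%R = x * y. Proof. by []. Qed.

Lemma dde_rhs_lincomb N (A B : 'M[R]_N) a b x y x' y' i :
  dde_rhs A B (fun j => a * x j + b * x' j) (fun j => a * y j + b * y' j) i
  = a * dde_rhs A B x y i + b * dde_rhs A B x' y' i.
Proof.
rewrite /dde_rhs -[RHS]R_addE -!(R_mulE a) -!(R_mulE b) !mulr_sumr -big_split.
by apply: eq_bigr => j _; rewrite /= !(R_addE, R_mulE); ring.
Qed.

Section HarmonicEquations.
Variables (N : nat) (A B : 'M[R]_N) (la co si : R).

Definition harmonic_eqs (c s : 'I_N -> R) : Prop :=
  forall i, dde_rhs A B c (fun j => co * c j - si * s j) i = la * s i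
         /\ dde_rhs A B s (fun j => co * s j + si * c j) i = - (la * c i).

Local Open Scope ring_scope.

Lemma mulmx_dde_rhs_col (x y : 'cV[R]_N) (f : 'I_N -> R) :
  A *m x + B *m y = \col_i f i
  <-> forall i, dde_rhs A B (fun j => x j 0) (fun j => y j 0) i = f i.
Proof.
rewrite /dde_rhs; split => [/colP h i | h]; [move: (h i) | apply/colP => i];
  by rewrite !mxE -big_split //; apply: h.
Qed.

Definition harmonic_mx : 'M[R]_(N + N) :=
  block_mx (A + co *: B) (- (la%:M + si *: B)) (la%:M + si *: B) (A + co *: B).

Lemma harmonic_mx_mul (cv sv : 'cV[R]_N) :
  harmonic_mx *m col_mx cv sv
  = col_mx (A *m cv + B *m (co *: cv - si *: sv) - la *: sv)
           (A *m sv + B *m (co *: sv + si *: cv) + la *: cv).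
Proof.
rewrite mul_block_col !mulmxDl mul_scalar_mx -!scalemxAl mulNmx mulmxDl mul_scalar_mx.
rewrite -scalemxAl mulmxBr mulmxDr !linearZ /=; congr col_mx.
- rewrite opprD addrACA !scalerN addrA addrAC -!addrA; congr (_ + _).
  by rewrite addrC addrA (addrC (co *: _)).
- by rewrite addrACA addrC (addrC _ (co *: _)) addrA addrC !addrA.
Qed.

Lemma harmonic_eqs_block (c s : 'I_N -> R) :
  harmonic_mx *m col_mx (\col_j c j) (\col_j s j) = 0 <-> harmonic_eqs c s.
Proof.
set cv := \col_j c j; set sv := \col_j s j.
have sE : la *: sv = \col_j (la * s j) by apply/colP => j; rewrite !mxE.
have cE : - (la *: cv) = \col_j (- (la * c j)) by apply/colP => j; rewrite !mxE.
have w1E : (fun j => (co *: cv - si *: sv) j 0) = (fun j => co * c j - si * s j).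
  by apply: functional_extensionality => j; rewrite !mxE.
have w2E : (fun j => (co *: sv + si *: cv) j 0) = (fun j => co * s j + si * c j).
  by apply: functional_extensionality => j; rewrite !mxE.
have cvE : (fun j => cv j 0) = c by apply: functional_extensionality => j; rewrite mxE.
have svE : (fun j => sv j 0) = s by apply: functional_extensionality => j; rewrite mxE.
rewrite harmonic_mx_mul.
transitivity (A *m cv + B *m (co *: cv - si *: sv) = la *: sv
              /\ A *m sv + B *m (co *: sv + si *: cv) = - (la *: cv)).
  split => [/eqP | [-> ->]]; last by rewrite subrr addNr col_mx0.
  by rewrite col_mx_eq0 subr_eq0 addr_eq0 => /andP[/eqP -> /eqP ->].
rewrite sE cE !mulmx_dde_rhs_col w1E w2E cvE svE.
by split => [[h1 h2] i | h]; [split | split => i; case: (h i)].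
Qed.

Lemma harmonic_eqs_of_det_eq0 :
  \det harmonic_mx = 0 -> exists c s, harmonic_eqs c s /\ exists i, c i <> 0.
Proof.
case/block_kernel_nontrivial => cv [sv [/cV0Pn[i /eqP nz_ci] Mv]].
exists (fun j => cv j 0), (fun j => sv j 0); split; last by exists i.
have colK (v : 'cV[R]_N) : \col_j v j 0 = v by apply/colP => j; rewrite mxE.
by apply/harmonic_eqs_block; rewrite !colK.
Qed.

Lemma harmonic_eqs_trivial c s :
  \det harmonic_mx <> 0 -> harmonic_eqs c s -> forall i, c i = 0 /\ s i = 0.
Proof.
move=> /eqP nz_det /harmonic_eqs_block /(block_kernel_trivial nz_det) [/colP hc /colP hs] i.
by move: (hc i) (hs i); rewrite !mxE.
Qed.

End HarmonicEquations.

Definition harmonic N (c s : 'I_N -> R) (la : R) : 'I_N -> R -> R :=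
  fun j t => c j * cos (la * t) + s j * sin (la * t).

Lemma harmonic_solution N (A B : 'M[R]_N) (tau la : R) (c s : 'I_N -> R) :
  harmonic_eqs A B la (cos (la * tau)) (sin (la * tau)) c s ->
  dde_solution A B tau (harmonic c s la).
Proof.
move=> hcs t i; have [hc hs] := hcs i.
have shiftE : (fun j => harmonic c s la j (t - tau))
  = (fun j => cos (la * t) * (cos (la * tau) * c j - sin (la * tau) * s j)
            + sin (la * t) * (cos (la * tau) * s j + sin (la * tau) * c j)).
  apply: functional_extensionality => j.
  rewrite /harmonic Rmult_minus_distr_l cos_minus sin_minus; ring.
have nowE : (fun j => harmonic c s la j t)
  = (fun j => cos (la * t) * c j + sin (la * t) * s j).
  by apply: functional_extensionality => j; rewrite /harmonic; ring.
rewrite -/(dde_rhs A B _ _ i) shiftE nowE dde_rhs_lincomb hc hs.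
apply/is_derive_Reals; rewrite /harmonic; auto_derive => //; ring.
Qed.

Lemma cos_lam_periodic T k t : T <> 0 -> cos (lam T k * (t + T)) = cos (lam T k * t).
Proof.
move=> nz_T; rewrite -(cos_period (lam T k * t) k); congr cos; rewrite /lam; field; exact: nz_T.
Qed.

Lemma sin_lam_periodic T k t : T <> 0 -> sin (lam T k * (t + T)) = sin (lam T k * t).
Proof.
move=> nz_T; rewrite -(sin_period (lam T k * t) k); congr sin; rewrite /lam; field; exact: nz_T.
Qed.

Lemma harmonic_periodic N T k (c s : 'I_N -> R) :
  T <> 0 -> T_periodic T (harmonic c s (lam T k)).
Proof. by move=> nz_T t j; rewrite /harmonic cos_lam_periodic // sin_lam_periodic. Qed.

(** * Fourier coefficients of periodic solutions *)

Lemma ex_RInt_cont (f : R -> R) a b : (forall t, continuous f t) -> ex_RInt f a b.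
Proof. by move=> f_cont; apply: ex_RInt_continuous => t _; apply: f_cont. Qed.

Lemma continuous_bigsum (I : eqType) (r : seq I) (F : I -> R -> R) t :
  (forall j, continuous (F j) t) -> continuous (fun t => (\sum_(j <- r) F j t)%R) t.
Proof.
move=> F_cont; elim: r => [|j r IH].
  apply: (continuous_ext (fun _ => 0)); last exact: continuous_const.
  by move=> s; rewrite big_nil.
apply: (continuous_ext (fun s => plus (F j s) (\sum_(j <- r) F j s)%R)).
  by move=> s; rewrite big_cons.
exact: continuous_plus.
Qed.

Lemma RInt_bigsum (I : eqType) (r : seq I) (F : I -> R -> R) a b :
  (forall j, ex_RInt (F j) a b) ->
  RInt (fun t => (\sum_(j <- r) F j t)%R) a b = (\sum_(j <- r) RInt (F j) a b)%R.
Proof.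
move=> F_int; apply: is_RInt_unique; elim: r => [|j r IH].
  apply: (is_RInt_ext (fun _ => 0)); first by move=> s _; rewrite big_nil.
  by rewrite big_nil; have := is_RInt_const a b 0; rewrite scal_zero_r.
apply: (is_RInt_ext (fun s => plus (F j s) (\sum_(j <- r) F j s)%R)).
  by move=> s _; rewrite big_cons.
by rewrite big_cons; apply: is_RInt_plus => //; apply: RInt_correct.
Qed.

Lemma RInt_lincomb (F G : R -> R) (a b c d : R) :
  ex_RInt F c d -> ex_RInt G c d ->
  RInt (fun t => a * F t + b * G t) c d = a * RInt F c d + b * RInt G c d.
Proof.
move=> F_int G_int.
rewrite (RInt_ext _ (fun t => plus (scal a (F t)) (scal b (G t)))) //.
by rewrite RInt_plus ?RInt_scal //; apply: ex_RInt_scal.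
Qed.

Lemma RInt_scal_l (f : R -> R) (c a b : R) :
  ex_RInt f a b -> RInt (fun t => c * f t) a b = c * RInt f a b.
Proof. by move=> f_int; have := RInt_scal f a b c f_int; rewrite /scal /= /mult. Qed.

Lemma continuous_dde_rhs N (A B : 'M[R]_N) (x y : 'I_N -> R -> R) i t :
  (forall j, continuous (x j) t) -> (forall j, continuous (y j) t) ->
  continuous (fun t => dde_rhs A B (fun j => x j t) (fun j => y j t) i) t.
Proof.
move=> x_cont y_cont; apply: continuous_bigsum => j.
apply: (continuous_ext (fun t => plus (mult (A i j) (x j t)) (mult (B i j) (y j t)))) => //.
by apply: continuous_plus; apply: continuous_mult => //; apply: continuous_const.
Qed.

Lemma RInt_dde_rhs N (A B : 'M[R]_N) (x y : 'I_N -> R -> R) (phi : R -> R) i a b :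
  (forall j t, continuous (x j) t) -> (forall j t, continuous (y j) t) ->
  (forall t, continuous phi t) ->
  RInt (fun t => dde_rhs A B (fun j => x j t) (fun j => y j t) i * phi t) a b
  = dde_rhs A B (fun j => RInt (fun t => x j t * phi t) a b)
                  (fun j => RInt (fun t => y j t * phi t) a b) i.
Proof.
move=> x_cont y_cont phi_cont.
have prod_int (f : R -> R) : (forall t, continuous f t) -> ex_RInt (fun t => f t * phi t) a b.
  by move=> f_cont; apply: ex_RInt_cont => t; apply: continuous_mult.
rewrite (RInt_ext _ (fun t => dde_rhs A B (fun j => x j t * phi t) (fun j => y j t * phi t) i)).
- rewrite RInt_bigsum => [|j]; last by apply: ex_RInt_plus; apply: ex_RInt_scal; apply: prod_int.
  apply: eq_bigr => j _.
  by rewrite (@RInt_lincomb (fun t => x j t * phi t) (fun t => y j t * phi t)) //;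
    apply: prod_int.
- move=> t _; rewrite /dde_rhs -R_mulE mulr_suml; apply: eq_bigr => j _.
  by rewrite /= !(R_addE, R_mulE); ring.
Qed.

Lemma RInt_periodic (T : R) (h : R -> R) a :
  (forall t, continuous h t) -> (forall t, h (t + T) = h t) ->
  RInt h a (a + T) = RInt h 0 T.
Proof.
move=> h_cont h_per; have h_int b c : ex_RInt h b c by apply: ex_RInt_cont.
rewrite -(RInt_Chasles h a 0 (a + T)) // -(RInt_Chasles h 0 T (a + T)) //.
have -> : RInt h T (a + T) = RInt h 0 a.
  have := RInt_comp_lin h 1 T 0 a (h_int _ _).
  rewrite Rmult_0_r Rmult_1_l Rplus_0_l Rplus_comm => <-.
  by apply: RInt_ext => t _; rewrite /scal /= /mult /= !Rmult_1_l h_per.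
rewrite -(opp_RInt_swap h 0 a) // /plus /opp /=; ring.
Qed.

Lemma RInt_shift_periodic (T tau : R) (h : R -> R) :
  (forall t, continuous h t) -> (forall t, h (t + T) = h t) ->
  RInt (fun t => h (t - tau)) 0 T = RInt h 0 T.
Proof.
move=> h_cont h_per; rewrite -(RInt_periodic (- tau) h_cont h_per).
have := RInt_comp_lin h 1 (- tau) 0 T (ex_RInt_cont _ _ h_cont).
rewrite Rmult_0_r Rmult_1_l Rplus_0_l Rplus_comm => <-.
by apply: RInt_ext => t _; rewrite /scal /= /mult /= !Rmult_1_l.
Qed.

Lemma RInt_by_parts (f df g dg : R -> R) a b :
  (forall t, is_derive f t (df t)) -> (forall t, is_derive g t (dg t)) ->
  (forall t, continuous df t) -> (forall t, continuous dg t) ->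
  f b * g b = f a * g a ->
  RInt (fun t => df t * g t) a b = - RInt (fun t => f t * dg t) a b.
Proof.
move=> f_der g_der df_cont dg_cont fg_ab.
have cont_of_der h dh t : is_derive h t dh -> continuous h t.
  by move=> h_der; apply: ex_derive_continuous; exists dh.
have prod_int (p q : R -> R) : (forall t, continuous p t) -> (forall t, continuous q t) ->
    ex_RInt (fun t => p t * q t) a b.
  by move=> p_cont q_cont; apply: ex_RInt_cont => t; apply: continuous_mult.
have FTC : is_RInt (fun t => plus (df t * g t) (f t * dg t)) a b
             (minus (f b * g b) (f a * g a)).
  apply: (is_RInt_derive (fun t => f t * g t)) => t _.
  - by apply: is_derive_mult => //; exact: Rmult_comm.
  - by apply: continuous_plus; apply: continuous_mult => //; exact: cont_of_der.
move: (is_RInt_unique _ _ _ _ FTC).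
rewrite RInt_plus; try by apply: prod_int => // t; exact: cont_of_der.
rewrite fg_ab /minus /plus /opp /=; lra.
Qed.

Definition cos_coeff (T la : R) (f : R -> R) : R := RInt (fun t => f t * cos (la * t)) 0 T.
Definition sin_coeff (T la : R) (f : R -> R) : R := RInt (fun t => f t * sin (la * t)) 0 T.

Lemma continuous_cos_mul la t : continuous (fun t => cos (la * t)) t.
Proof. by apply: ex_derive_continuous; auto_derive. Qed.

Lemma continuous_sin_mul la t : continuous (fun t => sin (la * t)) t.
Proof. by apply: ex_derive_continuous; auto_derive. Qed.

Section ShiftedCoefficients.
Variables (T tau : R) (k : nat) (g : R -> R).
Hypotheses (nz_T : T <> 0) (g_cont : forall t, continuous g t)
  (g_per : forall t, g (t + T) = g t).

Local Notation la := (lam T k).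

Lemma RInt_shift_trig (trig : R -> R) :
  (forall t, continuous trig t) -> (forall t, trig (la * (t + T)) = trig (la * t)) ->
  RInt (fun t => g (t - tau) * trig (la * t)) 0 T
  = RInt (fun t => g t * trig (la * t + la * tau)) 0 T.
Proof.
move=> trig_cont trig_per.
rewrite -(@RInt_shift_periodic T tau (fun t => g t * trig (la * t + la * tau))).
- apply: RInt_ext => t _.
  by rewrite Rmult_minus_distr_l /Rminus Rplus_assoc Rplus_opp_l Rplus_0_r.
- move=> t; apply: continuous_mult => //.
  apply: (continuous_comp (fun t => la * t + la * tau) trig) => //.
  by apply: ex_derive_continuous; auto_derive.
- move=> t; have -> : la * (t + T) + la * tau = la * (t + tau + T) by ring.
  by rewrite g_per trig_per Rmult_plus_distr_l.
Qed.

Let trig_coeff_int (trig : R -> R) : (forall t, continuous trig t) ->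
  ex_RInt (fun t => g t * trig (la * t)) 0 T.
Proof.
move=> trig_cont; apply: ex_RInt_cont => t; apply: continuous_mult => //.
apply: (continuous_comp (fun t => la * t) trig) => //.
by apply: ex_derive_continuous; auto_derive.
Qed.

Lemma cos_coeff_shift :
  cos_coeff T la (fun t => g (t - tau))
  = cos (la * tau) * cos_coeff T la g - sin (la * tau) * sin_coeff T la g.
Proof.
rewrite /cos_coeff /sin_coeff RInt_shift_trig; last 2 first.
- exact: continuous_cos.
- by move=> t; apply: cos_lam_periodic.
have sum_angle t : g t * cos (la * t + la * tau)
    = cos (la * tau) * (g t * cos (la * t)) + - sin (la * tau) * (g t * sin (la * t)).
  by rewrite cos_plus; ring.
rewrite (RInt_ext _ _ _ _ (fun t _ => sum_angle t)) RInt_lincomb; first ring.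
- exact: (trig_coeff_int continuous_cos).
- exact: (trig_coeff_int continuous_sin).
Qed.

Lemma sin_coeff_shift :
  sin_coeff T la (fun t => g (t - tau))
  = cos (la * tau) * sin_coeff T la g + sin (la * tau) * cos_coeff T la g.
Proof.
rewrite /sin_coeff /cos_coeff RInt_shift_trig; last 2 first.
- exact: continuous_sin.
- by move=> t; apply: sin_lam_periodic.
have sum_angle t : g t * sin (la * t + la * tau)
    = cos (la * tau) * (g t * sin (la * t)) + sin (la * tau) * (g t * cos (la * t)).
  by rewrite sin_plus; ring.
rewrite (RInt_ext _ _ _ _ (fun t _ => sum_angle t)) RInt_lincomb //.
- exact: (trig_coeff_int continuous_sin).
- exact: (trig_coeff_int continuous_cos).
Qed.

End ShiftedCoefficients.

Section CoefficientsOfPeriodicSolutions.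
Variables (N : nat) (A B : 'M[R]_N) (tau T : R) (k : nat) (u : 'I_N -> R -> R).
Hypotheses (nz_T : T <> 0) (u_sol : dde_solution A B tau u) (u_per : T_periodic T u).

Local Notation la := (lam T k).
Let du i t := dde_rhs A B (fun j => u j t) (fun j => u j (t - tau)) i.

Lemma solution_continuous j t : continuous (u j) t.
Proof. by apply: ex_derive_continuous; exists (du j t); apply/is_derive_Reals/u_sol. Qed.

Let shifted_continuous j t : continuous (fun t => u j (t - tau)) t.
Proof.
apply: (continuous_comp (fun t => t - tau) (u j)); last exact: solution_continuous.
by apply: ex_derive_continuous; auto_derive.
Qed.

Let du_continuous i t : continuous (du i) t.
Proof.
by apply: continuous_dde_rhs => j; [exact: solution_continuous | exact: shifted_continuous].
Qed.

Let du_cos_coeff i : cos_coeff T la (du i)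
  = dde_rhs A B (fun j => cos_coeff T la (u j))
      (fun j => cos (la * tau) * cos_coeff T la (u j) - sin (la * tau) * sin_coeff T la (u j)) i.
Proof.
rewrite /cos_coeff /du RInt_dde_rhs; last 3 first.
- exact: solution_continuous.
- exact: shifted_continuous.
- exact: continuous_cos_mul.
congr dde_rhs; apply: functional_extensionality => j.
by rewrite -cos_coeff_shift //; exact: solution_continuous.
Qed.

Let du_sin_coeff i : sin_coeff T la (du i)
  = dde_rhs A B (fun j => sin_coeff T la (u j))
      (fun j => cos (la * tau) * sin_coeff T la (u j) + sin (la * tau) * cos_coeff T la (u j)) i.
Proof.
rewrite /sin_coeff /du RInt_dde_rhs; last 3 first.
- exact: solution_continuous.
- exact: shifted_continuous.
- exact: continuous_sin_mul.
congr dde_rhs; apply: functional_extensionality => j.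
by rewrite -sin_coeff_shift //; exact: solution_continuous.
Qed.

Let du_cos_coeff_parts i : cos_coeff T la (du i) = la * sin_coeff T la (u i).
Proof.
rewrite /cos_coeff (@RInt_by_parts (u i) (du i) (fun t => cos (la * t))
  (fun t => - la * sin (la * t))).
- have scaled t : u i t * (- la * sin (la * t)) = - la * (u i t * sin (la * t)) by ring.
  rewrite (RInt_ext _ _ _ _ (fun t _ => scaled t)) RInt_scal_l /sin_coeff; first ring.
  apply: ex_RInt_cont => t.
  by apply: continuous_mult; [exact: solution_continuous | exact: continuous_sin_mul].
- by move=> t; apply/is_derive_Reals/u_sol.
- by move=> t; auto_derive => //; ring.
- exact: du_continuous.
- by move=> t; apply: ex_derive_continuous; auto_derive.
- have := u_per 0 i; rewrite Rplus_0_l => ->.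
  by have := @cos_lam_periodic T k 0 nz_T; rewrite Rplus_0_l => ->.
Qed.

Let du_sin_coeff_parts i : sin_coeff T la (du i) = - (la * cos_coeff T la (u i)).
Proof.
rewrite /sin_coeff (@RInt_by_parts (u i) (du i) (fun t => sin (la * t))
  (fun t => la * cos (la * t))).
- have scaled t : u i t * (la * cos (la * t)) = la * (u i t * cos (la * t)) by ring.
  rewrite (RInt_ext _ _ _ _ (fun t _ => scaled t)) RInt_scal_l /cos_coeff //.
  apply: ex_RInt_cont => t.
  by apply: continuous_mult; [exact: solution_continuous | exact: continuous_cos_mul].
- by move=> t; apply/is_derive_Reals/u_sol.
- by move=> t; auto_derive => //; ring.
- exact: du_continuous.
- by move=> t; apply: ex_derive_continuous; auto_derive.
- have := u_per 0 i; rewrite Rplus_0_l => ->.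
  by have := @sin_lam_periodic T k 0 nz_T; rewrite Rplus_0_l => ->.
Qed.

Lemma periodic_solution_coeffs :
  harmonic_eqs A B la (cos (la * tau)) (sin (la * tau))
    (fun j => cos_coeff T la (u j)) (fun j => sin_coeff T la (u j)).
Proof.
by move=> i; rewrite -du_cos_coeff -du_sin_coeff du_cos_coeff_parts du_sin_coeff_parts.
Qed.

End CoefficientsOfPeriodicSolutions.

(** * Vanishing Fourier coefficients *)

Lemma cos_mul_cos u v : cos u * cos v = / 2 * cos (v + u) + / 2 * cos (v - u).
Proof. rewrite cos_plus cos_minus; field. Qed.

Lemma cos_mul_sin u v : cos u * sin v = / 2 * sin (v + u) + / 2 * sin (v - u).
Proof. rewrite sin_plus sin_minus; field. Qed.

Lemma sin_mul_cos u v : sin u * cos v = / 2 * sin (v + u) + - / 2 * sin (v - u).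
Proof. rewrite sin_plus sin_minus; field. Qed.

Lemma sin_mul_sin u v : sin u * sin v = / 2 * cos (v - u) + - / 2 * cos (v + u).
Proof. rewrite cos_plus cos_minus; field. Qed.

Lemma lam0 T : lam T 0 = 0.
Proof. by rewrite /lam /Rdiv /=; ring. Qed.

Lemma lamS T n : lam T n.+1 = lam T n + lam T 1.
Proof. by rewrite /lam S_INR /= /Rdiv; ring. Qed.

Section TrigPolynomials.
Variable T : R.

Inductive trig_poly : (R -> R) -> Prop :=
| trig_poly_cos k : trig_poly (fun t => cos (lam T k * t))
| trig_poly_sin k : trig_poly (fun t => sin (lam T k * t))
| trig_poly_add f g : trig_poly f -> trig_poly g -> trig_poly (fun t => f t + g t)
| trig_poly_scale c f : trig_poly f -> trig_poly (fun t => c * f t)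
| trig_poly_ext f g : (forall t, f t = g t) -> trig_poly f -> trig_poly g.

Lemma trig_poly_const c : trig_poly (fun _ => c).
Proof.
apply: (trig_poly_ext _ (trig_poly_scale c (trig_poly_cos 0))) => t.
by rewrite lam0 Rmult_0_l cos_0 Rmult_1_r.
Qed.

Lemma trig_poly_mul_fundamental f : trig_poly f ->
  trig_poly (fun t => cos (lam T 1 * t) * f t) /\ trig_poly (fun t => sin (lam T 1 * t) * f t).
Proof.
have lamS_t n t : lam T n.+2 * t = lam T n.+1 * t + lam T 1 * t.
  by rewrite (lamS T n.+1) Rmult_plus_distr_r.
have lamP_t n t : lam T n * t = lam T n.+1 * t - lam T 1 * t.
  by rewrite (lamS T n); ring.
have halves c1 c2 f1 f2 : trig_poly f1 -> trig_poly f2 ->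
    trig_poly (fun t => c1 * f1 t + c2 * f2 t).
  by move=> h1 h2; apply: trig_poly_add; apply: trig_poly_scale.
elim=> {f} [[|n] | [|n] | f g _ [cf sf] _ [cg sg] | c f _ [cf sf] | f g fg _ [cf sf]]; split.
- apply: (trig_poly_ext _ (trig_poly_cos 1)) => t.
  by rewrite lam0 Rmult_0_l cos_0 Rmult_1_r.
- apply: (trig_poly_ext _ (trig_poly_sin 1)) => t.
  by rewrite lam0 Rmult_0_l cos_0 Rmult_1_r.
- apply: (trig_poly_ext _ (halves (/ 2) (/ 2) _ _ (trig_poly_cos n.+2) (trig_poly_cos n))) => t.
  by rewrite cos_mul_cos lamS_t (lamP_t n).
- apply: (trig_poly_ext _ (halves (/ 2) (- / 2) _ _ (trig_poly_sin n.+2) (trig_poly_sin n))) => t.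
  by rewrite sin_mul_cos lamS_t (lamP_t n).
- apply: (trig_poly_ext _ (trig_poly_const 0)) => t.
  by rewrite lam0 Rmult_0_l sin_0 Rmult_0_r.
- apply: (trig_poly_ext _ (trig_poly_const 0)) => t.
  by rewrite lam0 Rmult_0_l sin_0 Rmult_0_r.
- apply: (trig_poly_ext _ (halves (/ 2) (/ 2) _ _ (trig_poly_sin n.+2) (trig_poly_sin n))) => t.
  by rewrite cos_mul_sin lamS_t (lamP_t n).
- apply: (trig_poly_ext _ (halves (/ 2) (- / 2) _ _ (trig_poly_cos n) (trig_poly_cos n.+2))) => t.
  by rewrite sin_mul_sin lamS_t (lamP_t n).
- by apply: (trig_poly_ext _ (trig_poly_add cf cg)) => t; ring.
- by apply: (trig_poly_ext _ (trig_poly_add sf sg)) => t; ring.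
- by apply: (trig_poly_ext _ (trig_poly_scale c cf)) => t; ring.
- by apply: (trig_poly_ext _ (trig_poly_scale c sf)) => t; ring.
- by apply: (trig_poly_ext _ cf) => t; rewrite fg.
- by apply: (trig_poly_ext _ sf) => t; rewrite fg.
Qed.

Lemma trig_poly_kernel (c x : R) n : trig_poly (fun t => (c + cos (lam T 1 * (t - x))) ^ n).
Proof.
elim: n => [|n IH]; first exact: (trig_poly_ext _ (trig_poly_const 1)).
have [cos_IH sin_IH] := trig_poly_mul_fundamental IH.
apply: (trig_poly_ext _ (trig_poly_add (trig_poly_scale c IH)
  (trig_poly_add (trig_poly_scale (cos (lam T 1 * x)) cos_IH)
                 (trig_poly_scale (sin (lam T 1 * x)) sin_IH)))) => t.
by rewrite /= Rmult_minus_distr_l cos_minus; ring.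
Qed.

Lemma trig_poly_continuous f : trig_poly f -> forall t, continuous f t.
Proof.
elim=> {f} [k | k | f g _ f_cont _ g_cont | c f _ f_cont | f g fg _ f_cont] t.
- exact: continuous_cos_mul.
- exact: continuous_sin_mul.
- exact: continuous_plus.
- by apply: continuous_mult => //; apply: continuous_const.
- by apply: (continuous_ext f) => //.
Qed.

Lemma trig_poly_periodic f : T <> 0 -> trig_poly f -> forall t, f (t + T) = f t.
Proof.
move=> nz_T; elim=> {f} [k | k | f g _ f_per _ g_per | c f _ f_per | f g fg _ f_per] t.
- exact: cos_lam_periodic.
- exact: sin_lam_periodic.
- by rewrite f_per g_per.
- by rewrite f_per.
- by rewrite -!fg f_per.
Qed.

End TrigPolynomials.

Section OrthogonalToTrigPolynomials.
Variables (T : R) (f : R -> R).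
Hypotheses (nz_T : T <> 0) (f_cont : forall t, continuous f t)
  (f_per : forall t, f (t + T) = f t)
  (f_coeffs : forall k, cos_coeff T (lam T k) f = 0 /\ sin_coeff T (lam T k) f = 0).

Lemma RInt_mul_trig_poly_eq0 g a : trig_poly T g -> RInt (fun t => f t * g t) a (a + T) = 0.
Proof.
move=> g_trig; rewrite RInt_periodic; last 2 first.
- by move=> t; apply: continuous_mult => //; exact: (trig_poly_continuous g_trig).
- by move=> t; rewrite f_per (trig_poly_periodic nz_T g_trig).
have prod_int h : trig_poly T h -> ex_RInt (fun t => f t * h t) 0 T.
  move=> h_trig; apply: ex_RInt_cont => t.
  by apply: continuous_mult => //; exact: (trig_poly_continuous h_trig).
elim: g_trig => {g} [k | k | g h g_trig g0 h_trig h0 | c g g_trig g0 | g h gh g_trig g0].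
- exact: (proj1 (f_coeffs k)).
- exact: (proj2 (f_coeffs k)).
- rewrite (RInt_ext _ (fun t => plus (f t * g t) (f t * h t))) => [|t _]; last first.
    by rewrite /plus /=; ring.
  by rewrite RInt_plus ?g0 ?h0 ?plus_zero_l //; apply: prod_int.
- rewrite (RInt_ext _ (fun t => scal c (f t * g t))) => [|t _]; last first.
    by rewrite /scal /= /mult /=; ring.
  by rewrite RInt_scal ?g0 ?scal_zero_r //; apply: prod_int.
- by rewrite -[RHS]g0; apply: RInt_ext => t _; rewrite gh.
Qed.

End OrthogonalToTrigPolynomials.

Lemma cos_Rabs u : cos (Rabs u) = cos u.
Proof. by case: (Rcase_abs u) => [/Rabs_left | /Rabs_right] ->; rewrite ?cos_neg. Qed.

Lemma cos_le_cos_Rabs u v : Rabs u <= Rabs v <= PI -> cos v <= cos u.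
Proof.
move=> [uv vPI]; rewrite -(cos_Rabs u) -(cos_Rabs v).
case: (Rle_lt_or_eq_dec _ _ uv) => [lt_uv | ->]; last exact: Rle_refl.
have := Rabs_pos u; have := Rabs_pos v => v0 u0.
apply: Rlt_le; apply: cos_decreasing_1; lra.
Qed.

Definition peak_kernel (T x e t : R) : R := 1 - cos (lam T 1 * e) + cos (lam T 1 * (t - x)).

Section PeakKernel.
Variables (T x e : R).
Hypotheses (T_pos : 0 < T) (e_pos : 0 < e) (e_small : e <= T / 4).

Let w_pos : 0 < lam T 1.
Proof. rewrite /lam /=; apply: Rdiv_lt_0_compat => //; have := PI_RGT_0; lra. Qed.

Let w_dist_le_PI d : 0 <= d <= T / 2 -> 0 <= lam T 1 * d <= PI.
Proof.
move=> [d0 dT]; have -> : PI = lam T 1 * (T / 2) by rewrite /lam /=; field; lra.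
split; [apply: Rmult_le_pos; lra | apply: Rmult_le_compat_l; lra].
Qed.

Let Rabs_w_dist t : Rabs (lam T 1 * (t - x)) = lam T 1 * Rabs (t - x).
Proof. by rewrite Rabs_mult Rabs_pos_eq //; apply: Rlt_le. Qed.

Lemma peak_kernel_le1 t :
  e <= Rabs (t - x) <= T / 2 -> Rabs (peak_kernel T x e t) <= 1.
Proof.
move=> [far near]; have := Rabs_pos (t - x) => dist0.
have : cos (lam T 1 * (t - x)) <= cos (lam T 1 * e).
  apply: cos_le_cos_Rabs; rewrite Rabs_w_dist Rabs_pos_eq; last by apply: Rmult_le_pos; lra.
  split; [apply: Rmult_le_compat_l; lra | apply: (proj2 (w_dist_le_PI _)); lra].
have := COS_bound (lam T 1 * e); have := COS_bound (lam T 1 * (t - x)).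
by rewrite /peak_kernel => *; apply: Rabs_le; lra.
Qed.

Lemma peak_kernel_ge t d :
  Rabs (t - x) <= d <= T / 2 -> 1 - cos (lam T 1 * e) + cos (lam T 1 * d) <= peak_kernel T x e t.
Proof.
move=> [near dT]; have := Rabs_pos (t - x) => dist0.
suff : cos (lam T 1 * d) <= cos (lam T 1 * (t - x)) by rewrite /peak_kernel; lra.
apply: cos_le_cos_Rabs; rewrite Rabs_w_dist (Rabs_pos_eq (lam T 1 * d)); last first.
  by apply: Rmult_le_pos; lra.
split; [apply: Rmult_le_compat_l; lra | apply: (proj2 (w_dist_le_PI _)); lra].
Qed.

Lemma peak_kernel_peak_gt1 : 1 < 1 - cos (lam T 1 * e) + cos (lam T 1 * (e / 2)).
Proof.
suff : cos (lam T 1 * e) < cos (lam T 1 * (e / 2)) by lra.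
have := w_dist_le_PI (d := e) ltac:(lra); have := w_dist_le_PI (d := e / 2) ltac:(lra).
move=> [h1 h2] [h3 h4]; apply: cos_decreasing_1 => //.
by apply: Rmult_lt_compat_l => //; lra.
Qed.

Lemma peak_kernel_pow_mul_ge_bound (f : R -> R) M n t :
  (forall t, Rabs (t - x) < e -> 0 < f t) ->
  (forall t, Rabs (t - x) <= T / 2 -> Rabs (f t) <= M) ->
  Rabs (t - x) <= T / 2 -> - M <= f t * peak_kernel T x e t ^ n.
Proof.
move=> f_near f_bound window.
have M_ge0 : 0 <= M := Rle_trans _ _ _ (Rabs_pos _) (f_bound t window).
have [near | far] := Rlt_le_dec (Rabs (t - x)) e.
- have : 1 - cos (lam T 1 * e) + cos (lam T 1 * e) <= peak_kernel T x e t.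
    by apply: peak_kernel_ge; lra.
  have ft_pos := f_near t near => q_ge1.
  have : 0 <= f t * peak_kernel T x e t ^ n by apply: Rmult_le_pos; [lra | apply: pow_le; lra].
  lra.
- have q_le1 : Rabs (peak_kernel T x e t ^ n) <= 1.
    rewrite -RPow_abs -(pow1 n); apply: pow_incr; split; first exact: Rabs_pos.
    exact: peak_kernel_le1.
  have : Rabs (f t * peak_kernel T x e t ^ n) <= M.
    rewrite Rabs_mult -(Rmult_1_r M); apply: Rmult_le_compat => //; try exact: Rabs_pos.
    exact: f_bound.
  by move/Rabs_le_between; lra.
Qed.

Lemma peak_kernel_pow_mul_ge_peak (f : R -> R) m n t :
  0 <= m -> m <= f t -> Rabs (t - x) <= e / 2 ->
  m * (1 - cos (lam T 1 * e) + cos (lam T 1 * (e / 2))) ^ n <= f t * peak_kernel T x e t ^ n.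
Proof.
move=> m_ge0 m_le near; have := peak_kernel_peak_gt1 => r_gt1.
apply: Rmult_le_compat => //; first by apply: pow_le; lra.
by apply: pow_incr; split; [lra | apply: peak_kernel_ge; lra].
Qed.

End PeakKernel.

Lemma RInt_ge_two_level (F : R -> R) a b1 b2 c M L :
  a <= b1 -> b1 <= b2 -> b2 <= c -> (forall t, continuous F t) ->
  (forall t, a <= t <= c -> - M <= F t) -> (forall t, b1 <= t <= b2 -> L <= F t) ->
  - M * ((b1 - a) + (c - b2)) + L * (b2 - b1) <= RInt F a c.
Proof.
move=> ab1 b12 b2c F_cont F_low F_high; have F_int u v : ex_RInt F u v by apply: ex_RInt_cont.
have const_le u v K : u <= v -> (forall t, u <= t <= v -> K <= F t) -> K * (v - u) <= RInt F u v.
  move=> uv K_le; have := RInt_le (fun _ => K) F u v uv (ex_RInt_const _ _ _) (F_int u v)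
    (fun t t_in => K_le t ltac:(lra)).
  by rewrite RInt_const /scal /= /mult /= Rmult_comm.
rewrite -(RInt_Chasles F a b1 c) // -(RInt_Chasles F b1 b2 c) //.
have := const_le a b1 (- M) ab1 ltac:(move=> t ?; apply: F_low; lra).
have := const_le b1 b2 L b12 F_high.
have := const_le b2 c (- M) b2c ltac:(move=> t ?; apply: F_low; lra).
rewrite /plus /=; lra.
Qed.

Lemma pow_exceeds r b : 1 < r -> exists n, b < r ^ n.
Proof.
move=> r_gt1; have [n big] := Pow_x_infinity r ltac:(rewrite Rabs_pos_eq; lra) (b + 1).
exists n; have := big n (Nat.le_refl n).
by rewrite Rabs_pos_eq; [lra | apply: pow_le; lra].
Qed.

Lemma continuous_lower_bound_near (f : R -> R) x :
  continuous f x -> 0 < f x -> exists2 eta, 0 < eta & forall t, Rabs (t - x) < eta -> f x / 2 < f t.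
Proof.
move=> /(continuity_pt_filterlim f x) f_cont fx_pos.
have [eta [eta_pos near]] := f_cont (f x / 2) ltac:(lra).
exists eta => // t dist_t; have [-> | ne] := Req_dec t x; first lra.
have := near t (conj (conj I (nesym ne)) dist_t).
by rewrite /= /R_dist => /Rabs_def2 [? ?]; lra.
Qed.

Lemma continuous_bounded_on (f : R -> R) a b : a <= b -> (forall t, continuous f t) ->
  exists M, 0 <= M /\ forall t, a <= t <= b -> Rabs (f t) <= M.
Proof.
move=> ab f_cont.
have [t_max [max_ge _]] := continuity_ab_maj (fun t => Rabs (f t)) a b ab
  (fun t _ => continuity_pt_comp f Rabs t
     (proj2 (continuity_pt_filterlim f t) (f_cont t)) (Rcontinuity_abs _)).
by exists (Rabs (f t_max)); split; [exact: Rabs_pos | exact: max_ge].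
Qed.

Lemma trig_poly_orthogonal_nonpos T (f : R -> R) x :
  0 < T -> (forall t, continuous f t) ->
  (forall g, trig_poly T g -> RInt (fun t => f t * g t) (x - T / 2) (x - T / 2 + T) = 0) ->
  f x <= 0.
Proof.
move=> T_pos f_cont orth; apply: Rnot_lt_le => fx_pos.
have [eta eta_pos f_near] := continuous_lower_bound_near (f_cont x) fx_pos.
set e := Rmin eta (T / 4).
have e_pos : 0 < e by apply: Rmin_pos; lra.
have [e_eta e_T] : e <= eta /\ e <= T / 4 by split; [apply: Rmin_l | apply: Rmin_r].
have [M [M_ge0 f_bound]] := @continuous_bounded_on f (x - T / 2) (x - T / 2 + T) ltac:(lra) f_cont.
set r := 1 - cos (lam T 1 * e) + cos (lam T 1 * (e / 2)).
have [n big] := pow_exceeds (M * T / (f x / 2 * e)) (peak_kernel_peak_gt1 T_pos e_pos e_T).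
set F := fun t => f t * peak_kernel T x e t ^ n.
have F_cont t : continuous F t.
  apply: continuous_mult => //; apply: (trig_poly_continuous (T := T)).
  exact: trig_poly_kernel.
have := @RInt_ge_two_level F (x - T / 2) (x - e / 2) (x + e / 2) (x - T / 2 + T) M
  (f x / 2 * r ^ n) ltac:(lra) ltac:(lra) ltac:(lra) F_cont.
rewrite orth; last exact: trig_poly_kernel.
have F_low t : x - T / 2 <= t <= x - T / 2 + T -> - M <= F t.
  move=> t_in; apply: peak_kernel_pow_mul_ge_bound => // [s near | s window | ].
  - by have := f_near s ltac:(lra); lra.
  - by apply: f_bound; move/Rabs_le_between: window; lra.
  - by apply: Rabs_le; lra.
have F_high t : x - e / 2 <= t <= x + e / 2 -> f x / 2 * r ^ n <= F t.
  move=> t_in; have near : Rabs (t - x) <= e / 2 by apply: Rabs_le; lra.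
  by apply: peak_kernel_pow_mul_ge_peak => //; [lra | apply: Rlt_le; apply: f_near; lra].
move=> /(_ F_low F_high).
have pos : 0 < f x / 2 * e by apply: Rmult_lt_0_compat; lra.
have MT : M * T / (f x / 2 * e) * (f x / 2 * e) = M * T by field; lra.
have := Rmult_lt_compat_r _ _ _ pos big; rewrite MT.
have := Rmult_le_pos _ _ M_ge0 (Rlt_le _ _ e_pos); rewrite /r; lra.
Qed.

Lemma fourier_uniqueness T (f : R -> R) :
  0 < T -> (forall t, continuous f t) -> (forall t, f (t + T) = f t) ->
  (forall k, cos_coeff T (lam T k) f = 0 /\ sin_coeff T (lam T k) f = 0) ->
  forall x, f x = 0.
Proof.
move=> T_pos f_cont f_per f_coeffs x.
have orth g a : trig_poly T g -> RInt (fun t => f t * g t) a (a + T) = 0.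
  by apply: RInt_mul_trig_poly_eq0 => //; lra.
apply: Rle_antisym; first by apply: (trig_poly_orthogonal_nonpos T_pos f_cont) => g; exact: orth.
suff : - f x <= 0 by lra.
apply: (@trig_poly_orthogonal_nonpos T (fun t => - f t) x T_pos) => [t | g g_trig].
  by apply: (continuous_ext (fun t => opp (f t))) => //; exact: continuous_opp.
rewrite -(orth (fun t => -1 * g t) (x - T / 2) (trig_poly_scale (-1) g_trig)).
have neg t : - f t * g t = f t * (-1 * g t) by ring.
by apply: RInt_ext => t _; exact: neg.
Qed.

Theorem mainTheorem5 (N : nat) (A B : 'M[R]_N) (tau T : R)
    (htau : 0 < tau) (hT : 0 < T) :
  (~ exists u : 'I_N -> R -> R,
       dde_solution A B tau u /\ T_periodic T u /\ nontrivial u)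
  <-> (forall k : nat, hk A B tau T k <> 0).
Proof.
have nz_T : T <> 0 by lra.
split=> [no_solution k hk_eq0 | hk_neq0 [u [u_sol [u_per [t [i u_nz]]]]]].
- have [c [s [cs_eqs [i c_nz]]]] := harmonic_eqs_of_det_eq0 hk_eq0.
  apply: no_solution; exists (harmonic c s (lam T k)); split; last split.
  + exact: harmonic_solution.
  + exact: harmonic_periodic.
  + by exists 0, i; rewrite /harmonic Rmult_0_r cos_0 sin_0 Rmult_0_r Rmult_1_r Rplus_0_r.
- apply: u_nz; apply: (fourier_uniqueness hT) => [s | s | k].
  + exact: solution_continuous.
  + exact: u_per.
  + exact: harmonic_eqs_trivial (hk_neq0 k) (periodic_solution_coeffs k nz_T u_sol u_per) i.
Qed.
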